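(* Let $k\ge2$, let $\boldsymbol{\pi}\in\Delta_k$ with $\pi_i>0$ for all $i$, and let $f:\mathbb{R}^{k-1}_+\to\mathbb{R}$ be a differentiable convex function. For density ratio vectors $\mathbf{r}(x),\hat{\mathbf{r}}(x)\in\mathbb{R}^{k-1}_+$ (extended by $r_k=\hat r_k=1$), define class probability vectors $\boldsymbol{\eta}(x)=\Psi_{\mathrm{dr}}^{-1}(\mathbf{r}(x))$ and $\hat{\boldsymbol{\eta}}(x)=\Psi_{\mathrm{dr}}^{-1}(\hat{\mathbf{r}}(x))$, where $[\Psi_{\mathrm{dr}}^{-1}(\mathbf{r})]_i=\pi_i r_i/\sum_{j=1}^k\pi_j r_j$. Then for all $x\in\mathcal{X}$, $$\mathbf{B}_f(\boldsymbol{\eta}(x),\hat{\boldsymbol{\eta}}(x))=\frac{\pi_k}{\pi_k+\sum_{i=1}^{k-1}\pi_i r_i(x)}\,\mathbf{B}_{f^\circledast_\pi}(\mathbf{r}(x),\hat{\mathbf{r}}(x)),$$ where $f$ is evaluated on the first $k-1$ coordinates of $\boldsymbol{\eta},\hat{\boldsymbol{\eta}}$, and $f^\circledast_\pi:\mathbb{R}^{k-1}_+\to\mathbb{R}$ is $$f^\circledast_\pi(r_1,\ldots,r_{k-1})=\Big(1+\sum_{i=1}^{k-1}\pi_i r_i/\pi_k\Big)\, f\Big(\frac{\boldsymbol{\pi}_{[1:k-1]}\circ\mathbf{r}}{\pi_k+\sum_{i=1}^{k-1}\pi_i r_i}\Big).$$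
   Context: $\Delta_k=\{\mathbf{p}\in\mathbb{R}^k_{\ge0}:\mathbf{1}^\top\mathbf{p}=1\}$. $\boldsymbol{\pi}_{[1:k-1]}$ is the restriction of $\boldsymbol{\pi}$ to its first $k-1$ coordinates and $\circ$ is the elementwise product. The Bregman divergence of a differentiable convex $\phi$ is $\mathbf{B}_\phi(\mathbf{x},\mathbf{y})=\phi(\mathbf{x})-\phi(\mathbf{y})-\langle \mathbf{x}-\mathbf{y},\nabla\phi(\mathbf{y})\rangle$. *)

From HB Require Import structures.
From mathcomp Require Import all_boot all_order all_algebra.
From mathcomp Require Import all_classical all_reals all_analysis.
Set Implicit Arguments. Unset Strict Implicit. Unset Printing Implicit Defensive.
Import Order.TTheory GRing.Theory Num.Theory.
Import numFieldNormedType.Exports.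
Local Open Scope ring_scope.

(* Convention: k = n.+1 classes, indices 'I_n.+1; class k is ord_max.
   Vectors of R^{k-1} are row vectors 'rV[R]_n. *)

Section Defs.
Variable R : realType.

Definition in_simplex (k : nat) (p : 'I_k -> R) : Prop :=
  (forall i, 0 <= p i) /\ \sum_(i < k) p i = 1.

Definition posvec (n : nat) (v : 'rV[R]_n) : Prop := forall i, 0 < v ord0 i.

Definition convex_on_pos (n : nat) (f : 'rV[R]_n -> R) : Prop :=
  forall x y : 'rV[R]_n, posvec x -> posvec y -> forall t : R, 0 <= t <= 1 ->
    f (t *: x + (1 - t) *: y) <= t * f x + (1 - t) * f y.

Definition fst_idx (n : nat) (i : 'I_n) : 'I_n.+1 := widen_ord (leqnSn n) i.

Definition ext_dr (n : nat) (r : 'rV[R]_n) (i : 'I_n.+1) : R :=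
  if unlift ord_max i is Some j then r ord0 j else 1.

Definition psi_dr_inv (n : nat) (p : 'I_n.+1 -> R) (r : 'rV[R]_n) (i : 'I_n.+1) : R :=
  p i * ext_dr r i / \sum_(j < n.+1) p j * ext_dr r j.

Definition first_coords (n : nat) (eta : 'I_n.+1 -> R) : 'rV[R]_n :=
  \row_(i < n) eta (fst_idx i).

Definition grad (n : nat) (f : 'rV[R]_n -> R) (y : 'rV[R]_n) : 'rV[R]_n :=
  \row_(i < n) ('D_(delta_mx ord0 i) f y).

Definition bregman (n : nat) (phi : 'rV[R]_n -> R) (x y : 'rV[R]_n) : R :=
  phi x - phi y - \sum_(i < n) (x - y) ord0 i * grad phi y ord0 i.

Definition fstar (n : nat) (p : 'I_n.+1 -> R) (f : 'rV[R]_n -> R)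
    (r : 'rV[R]_n) : R :=
  (1 + \sum_(i < n) p (fst_idx i) * r ord0 i / p ord_max) *
  f (\row_(i < n) (p (fst_idx i) * r ord0 i /
        (p ord_max + \sum_(j < n) p (fst_idx j) * r ord0 j))).

End Defs.

From HB Require Import structures.
From mathcomp Require Import all_boot all_order all_algebra.
From mathcomp Require Import all_classical all_reals all_analysis.
From mathcomp Require Import ring.
Import Order.TTheory GRing.Theory Num.Theory.
Import numFieldNormedType.Exports.
Set Implicit Arguments. Unset Strict Implicit. Unset Printing Implicit Defensive.
Local Open Scope ring_scope.

(* With a_i = pi_i, c = pi_k and L(t) = c + sum_i a_i t_i, the class-probability
   map is normalize(t) = (a o t) / L(t), and f^circledast_pi is the perspective
   (L / c) (f o normalize).  Differentiating L(t) normalize(t) = a o t along r - s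
   gives L(s) D_(r-s) normalize(s) = L(r) (normalize r - normalize s), so the
   linear term of B_{f^circledast}(r, s) equals
   ((L r - L s) f(eta_hat) + L(r) <grad f(eta_hat), eta - eta_hat>) / c,
   and the divergence of the perspective collapses to (L(r) / c) B_f(eta, eta_hat). *)

Section Calculus.
Variable R : realType.

Lemma derive_coord (m n : nat) (M N : 'M[R]_(m, n)) i j :
  'D_N (fun P : 'M[R]_(m, n) => P i j) M = N i j.
Proof.
have := derive_mx (@derivable_id _ _ M N).
by rewrite derive_id => /(congr1 (fun P : 'M[R]_(m, n) => P i j)); rewrite mxE.
Qed.

Lemma differentiable_mx (V : normedModType R) (m n : nat) (G : V -> 'M[R]_(m, n)) x :
  (forall i j, differentiable (fun y => G y i j) x) -> differentiable G x.
Proof.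
move=> dG.
have -> : G = \sum_i \sum_j (fun y => G y i j *: delta_mx i j).
  apply/funext => y; rewrite [LHS]matrix_sum_delta fct_sumE.
  by apply: eq_bigr => i _; rewrite fct_sumE.
by apply: differentiable_sum => i; apply: differentiable_sum => j; exact: differentiableZl.
Qed.

Lemma bregmanE (n : nat) (phi : 'rV[R]_n -> R) x y : differentiable phi y ->
  bregman phi x y = phi x - phi y - 'D_(x - y) phi y.
Proof.
move=> dphi; rewrite /bregman (deriveE _ dphi); congr (_ - _).
rewrite [in RHS](row_sum_delta (x - y)) linear_sum; apply: eq_bigr => i _.
by rewrite linearZ /grad !mxE (deriveE _ dphi).
Qed.

Lemma derive_comp (U V W : normedModType R) (g : U -> V) (f : V -> W) x v :
  differentiable g x -> differentiable f (g x) ->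
  'D_v (f \o g) x = 'd f (g x) ('D_v g x).
Proof.
move=> dg df; rewrite !deriveE //; last exact: differentiable_comp.
by rewrite diff_comp.
Qed.

End Calculus.

Section Perspective.
Variables (R : realType) (n : nat) (a : 'I_n -> R) (c : R).

Definition denom (t : 'rV[R]_n) : R := c + \sum_i a i * t ord0 i.

Definition normalize (t : 'rV[R]_n) : 'rV[R]_n := \row_i (a i * t ord0 i / denom t).

Definition perspective (f : 'rV[R]_n -> R) (t : 'rV[R]_n) : R :=
  denom t / c * f (normalize t).

Lemma denomE : denom = cst c + \sum_i (cst (a i) * fun t : 'rV[R]_n => t ord0 i).
Proof. by apply/funext => t; rewrite /= fct_sumE. Qed.

Lemma differentiable_denom s : differentiable denom s.
Proof.
rewrite denomE; apply: differentiableD => //; apply: differentiable_sum => i.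
exact: differentiableM (differentiable_cst _ _) (differentiable_coord _ _ _).
Qed.

Lemma derive_denom s w : 'D_w denom s = \sum_i a i * w ord0 i.
Proof.
have dcoord i : derivable (fun t : 'rV[R]_n => t ord0 i) s w.
  exact/diff_derivable/differentiable_coord.
rewrite denomE deriveD ?derive_cst ?add0r //; last first.
  by apply: derivable_sum => i; apply: derivableM.
rewrite derive_sum => [|i]; last exact: derivableM.
by apply: eq_bigr => i _; rewrite deriveM // derive_cst derive_coord scaler0 addr0.
Qed.

Lemma derive_denomB r s : 'D_(r - s) denom s = denom r - denom s.
Proof.
rewrite derive_denom /denom opprD addrACA subrr add0r -sumrB.
by apply: eq_bigr => i _; rewrite !mxE mulrDr mulrN.
Qed.

Lemma normalize_coordE i :
  (fun t => normalize t ord0 i) =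
  (cst (a i) * fun t : 'rV[R]_n => t ord0 i) * fun t => (denom t)^-1.
Proof. by apply/funext => t; rewrite /= mxE. Qed.

Lemma differentiable_normalize s : denom s != 0 -> differentiable normalize s.
Proof.
move=> s0; apply: differentiable_mx => i j; rewrite (ord1 i) normalize_coordE.
apply: differentiableM; last exact: differentiableV (differentiable_denom s) s0.
exact: differentiableM (differentiable_cst _ _) (differentiable_coord _ _ _).
Qed.

Lemma derive_normalize_coord s w i : denom s != 0 ->
  'D_w (fun t => normalize t ord0 i) s =
  (a i * w ord0 i - normalize s ord0 i * 'D_w denom s) / denom s.
Proof.
move=> s0; have dden : derivable denom s w by exact/diff_derivable/differentiable_denom.
have dcoord : derivable (fun t : 'rV[R]_n => t ord0 i) s w.
  exact/diff_derivable/differentiable_coord.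
rewrite normalize_coordE deriveM; last 2 first.
- exact: derivableM.
- exact: derivableV.
rewrite deriveV // deriveM // derive_cst derive_coord scaler0 addr0 mxE /=.
by rewrite /GRing.scale /= !fctE; field.
Qed.

Lemma derive_normalize_secant r s : denom r != 0 -> denom s != 0 ->
  denom s *: 'D_(r - s) normalize s = denom r *: (normalize r - normalize s).
Proof.
move=> r0 s0; rewrite derive_mx; last exact/diff_derivable/differentiable_normalize.
apply/rowP => i; rewrite !mxE derive_normalize_coord // derive_denomB !mxE.
by rewrite /GRing.scale /=; field; apply/andP.
Qed.

Lemma perspectiveE f :
  perspective f = (c^-1 \o* denom) * (f \o normalize).
Proof. by apply/funext => t; rewrite !fctE. Qed.

Lemma differentiable_perspective f s : denom s != 0 ->
  differentiable f (normalize s) -> differentiable (perspective f) s.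
Proof.
move=> s0 df; rewrite perspectiveE; apply: differentiableM.
  exact: differentiableM (differentiable_denom s) (differentiable_cst _ _).
by apply: differentiable_comp; [exact: differentiable_normalize|].
Qed.

Lemma derive_perspective f s w : denom s != 0 -> differentiable f (normalize s) ->
  'D_w (perspective f) s =
  ('D_w denom s * f (normalize s) + denom s * 'd f (normalize s) ('D_w normalize s)) / c.
Proof.
move=> s0 df; have dnorm := differentiable_normalize s0.
have dden : derivable denom s w by exact/diff_derivable/differentiable_denom.
rewrite perspectiveE deriveM; last 2 first.
- exact: derivableM.
- exact/diff_derivable/differentiable_comp.
by rewrite deriveMr // derive_comp // !fctE /GRing.scale /=; ring.
Qed.

Lemma bregman_perspective f r s :
  c != 0 -> denom r != 0 -> denom s != 0 -> differentiable f (normalize s) ->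
  bregman f (normalize r) (normalize s) = c / denom r * bregman (perspective f) r s.
Proof.
move=> c0 r0 s0 df.
have secant : denom s * 'd f (normalize s) ('D_(r - s) normalize s) =
              denom r * 'd f (normalize s) (normalize r - normalize s).
  by rewrite -[LHS]linearZ -[RHS]linearZ /= derive_normalize_secant.
rewrite bregmanE // bregmanE; last exact: differentiable_perspective.
rewrite derive_perspective // secant derive_denomB (deriveE _ df) /perspective.
move: ('d f _ _) => d; move: (f (normalize r)) (f (normalize s)) => fr fs.
by field; rewrite c0 r0.
Qed.

End Perspective.

Section DensityRatio.
Variables (R : realType) (n : nat).
Implicit Types (p : 'I_n.+1 -> R) (r : 'rV[R]_n).

Lemma fst_idxE (i : 'I_n) : fst_idx i = lift ord_max i.
Proof. by apply: val_inj; rewrite /= /bump leqNgt ltn_ord. Qed.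

Lemma ext_dr_fst r i : ext_dr r (fst_idx i) = r ord0 i.
Proof. by rewrite /ext_dr fst_idxE liftK. Qed.

Lemma sum_ext_dr p r :
  \sum_(j < n.+1) p j * ext_dr r j = p ord_max + \sum_i p (fst_idx i) * r ord0 i.
Proof.
rewrite big_ord_recr /= addrC /ext_dr unlift_none mulr1; congr (_ + _).
by apply: eq_bigr => i _; rewrite -/(ext_dr r _) ext_dr_fst.
Qed.

Lemma first_coords_psi_dr_inv p r :
  first_coords (psi_dr_inv p r) = normalize (p \o @fst_idx n) (p ord_max) r.
Proof.
by apply/rowP => i; rewrite !mxE /psi_dr_inv sum_ext_dr ext_dr_fst.
Qed.

Lemma fstarE p f : p ord_max != 0 ->
  fstar p f = perspective (p \o @fst_idx n) (p ord_max) f.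
Proof.
move=> p0; apply/funext => r; rewrite /fstar /perspective /denom; congr (_ * _).
by rewrite -mulr_suml mulrDl divff.
Qed.

End DensityRatio.

Theorem proposition2 (R : realType) (n : nat) (hk : (1 <= n)%N)
  (p : 'I_n.+1 -> R) (hp : in_simplex p) (hpos : forall i, 0 < p i)
  (f : 'rV[R]_n -> R)
  (hdiff : forall y : 'rV[R]_n, posvec y -> differentiable f y)
  (hconv : convex_on_pos f)
  (X : Type) (r rh : X -> 'rV[R]_n)
  (hr : forall x, posvec (r x)) (hrh : forall x, posvec (rh x)) :
  forall x : X,
    bregman f (first_coords (psi_dr_inv p (r x)))
              (first_coords (psi_dr_inv p (rh x)))
    = p ord_max / (p ord_max + \sum_(i < n) p (fst_idx i) * r x ord0 i)
      * bregman (fstar p f) (r x) (rh x).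
Proof.
move=> x; set a := p \o @fst_idx n; set c := p ord_max.
have c_gt0 : 0 < c by exact: hpos.
have denom_gt0 t : posvec t -> 0 < denom a c t.
  move=> t_pos; rewrite ltr_pwDl // sumr_ge0 // => i _.
  by rewrite mulr_ge0 // ltW // ?hpos ?t_pos.
rewrite !first_coords_psi_dr_inv fstarE ?gt_eqF //.
apply: bregman_perspective; rewrite ?gt_eqF ?denom_gt0 //.
apply: hdiff => i; rewrite mxE divr_gt0 ?denom_gt0 //.
by rewrite mulr_gt0 ?hpos ?hrh.
Qed.
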